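(* For $a,b>0$ let $\mathrm{Herm}(a,b)$ denote the distribution of $U+2V$, where $U\sim\mathrm{Poisson}(a)$ and $V\sim\mathrm{Poisson}(b)$ are independent. If $0<a\le c$ and $0<b\le d$, then $\mathrm{Herm}(a,b)\le_{wd}\mathrm{Herm}(c,d)$.
   Context: For a real random variable $X$, its Lévy concentration function is $Q_X(\varepsilon)=\sup_{x_0\in\mathbb{R}}\Pr\{X\in[x_0,x_0+\varepsilon]\}$, $\varepsilon>0$. For random variables (or distributions) $X,Y$, write $X\le_{wd}Y$ if $Q_X(\varepsilon)\ge Q_Y(\varepsilon)$ for all $\varepsilon>0$. *)

From HB Require Import structures.
From mathcomp Require Import all_boot all_order all_algebra.
From mathcomp Require Import all_classical all_reals.
From mathcomp Require Import all_analysis.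
Set Implicit Arguments. Unset Strict Implicit. Unset Printing Implicit Defensive.
Import Order.TTheory GRing.Theory Num.Theory.
Local Open Scope classical_set_scope.
Local Open Scope ring_scope.

Section Defs.
Variable R : realType.

Definition poisson_pmf (a : R) (k : nat) : R :=
  expR (- a) * a ^+ k / (k`!)%:R.

(* Herm(a,b): law of U + 2V with U ~ Poisson(a), V ~ Poisson(b) independent;
   its mass at k is the convolution sum over V = j, U = k - 2j. *)
Definition herm_pmf (a b : R) (k : nat) : R :=
  \sum_(j < k./2.+1) poisson_pmf a (k - 2 * j) * poisson_pmf b j.

(* Pr{X in [x0, x0+e]} for an N-valued X with pmf p. All k <= x0+e with k >= 0
   satisfy k < |floor(x0+e)| + 1, so the finite sum covers every relevant k. *)
Definition interval_prob (p : nat -> R) (x0 e : R) : R :=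
  \sum_(k < (`|Num.floor (x0 + e)|%N).+1)
     (if (x0 <= k%:R) && (k%:R <= x0 + e) then p k else 0).

Definition levy_conc (p : nat -> R) (e : R) : R :=
  sup [set interval_prob p x0 e | x0 in [set: R]].

Definition le_wd (p q : nat -> R) : Prop :=
  forall e : R, 0 < e -> levy_conc q e <= levy_conc p e.

End Defs.

From mathcomp Require Import all_boot all_order all_algebra.
From mathcomp Require Import ring zify.
From mathcomp Require Import all_classical all_reals sequences exp.
Set Implicit Arguments.
Unset Strict Implicit.
Unset Printing Implicit Defensive.
Import Order.TTheory GRing.Theory Num.Theory.
Local Open Scope ring_scope.

(** Herm(a, b) has generating function exp(a (x - 1) + b (x^2 - 1)), so
    Herm(a + a', b + b') is the convolution of Herm(a, b) with Herm(a', b').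
    Convolving with a probability distribution on nat cannot increase the
    concentration function: each window probability of the convolution is an
    average of window probabilities of translates of the original law.
    Generating functions are handled as polynomials truncated at a degree
    exceeding every coefficient under consideration. *)

Section GeneratingPolynomial.
Variable R : comNzRingType.
Implicit Types (p q : nat -> R) (P Q : {poly R}).

Definition convn p q (n : nat) : R := \sum_(i < n.+1) p i * q (n - i)%N.

Definition genpoly (N : nat) p : {poly R} := \poly_(i < N) p i.

Lemma coef_genpolyM N p q n : (n < N)%N ->
  (genpoly N p * genpoly N q)`_n = convn p q n.
Proof.
move=> ltnN; rewrite coefM; apply: eq_bigr => i _.
have lt_iN : (i < N)%N by apply: leq_ltn_trans ltnN; rewrite -ltnS.
by rewrite !coef_poly lt_iN (leq_ltn_trans (leq_subr _ _) ltnN).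
Qed.

Lemma coef_genpolyM_comp_X2 N p q k : (k < N)%N ->
  (genpoly N p * (genpoly N q \Po 'X^2))`_k =
  \sum_(j < k./2.+1) p (k - 2 * j)%N * q j.
Proof.
move=> ltkN.
have -> : genpoly N q \Po 'X^2 = \sum_(j < N) q j *: 'X^(2 * j).
  rewrite /genpoly poly_def raddf_sum /=; apply: eq_bigr => j _.
  by rewrite comp_polyZ comp_Xn_poly -exprM.
rewrite mulr_sumr coef_sum.
have le_kN : (k./2.+1 <= N)%N by lia.
rewrite (big_ord_widen _ (fun j => p (k - 2 * j)%N * q j) le_kN) [RHS]big_mkcond /=.
apply: eq_bigr => j _; rewrite -scalerAr coefZ coefMXn coef_poly ltnS geq_half_double -mul2n.
case: ltnP => _; first by rewrite mulr0.
by rewrite (leq_ltn_trans (leq_subr _ _) ltkN) mulrC.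
Qed.

Lemma take_polyMr N P Q : take_poly N (P * take_poly N Q) = take_poly N (P * Q).
Proof.
by rewrite -[in RHS](poly_take_drop N Q) mulrDr mulrA take_polyD take_polyMXn_0 addr0.
Qed.

Lemma coef_mul_take_poly N P Q n : (n < N)%N ->
  (take_poly N P * take_poly N Q)`_n = (P * Q)`_n.
Proof.
move=> ltnN; transitivity (take_poly N (take_poly N P * take_poly N Q))`_n.
  by rewrite coef_take_poly ltnN.
by rewrite take_polyMr mulrC take_polyMr mulrC coef_take_poly ltnN.
Qed.

Lemma take_poly_comp_Xn N s P : (0 < s)%N ->
  take_poly N (take_poly N P \Po 'X^s) = take_poly N (P \Po 'X^s).
Proof.
move=> s_gt0; apply/polyP => i; rewrite !coef_take_poly; case: ltnP => // ltiN.
rewrite !coef_comp_poly_Xn //; case: ifP => // _.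
by rewrite coef_take_poly (leq_ltn_trans (leq_div _ _) ltiN).
Qed.

Lemma coef_take_mul_comp_Xn N s P Q n :
  (0 < s)%N -> (n < N)%N ->
  (take_poly N P * (take_poly N Q \Po 'X^s))`_n = (P * (Q \Po 'X^s))`_n.
Proof.
move=> s_gt0 ltnN; rewrite -(coef_mul_take_poly (N := N)) // take_poly_comp_Xn //.
by rewrite take_poly_id ?size_take_poly // coef_mul_take_poly.
Qed.

Lemma horner1_genpoly N p : (genpoly N p).[1] = \sum_(i < N) p i.
Proof. by rewrite horner_poly; under eq_bigr do rewrite expr1n mulr1. Qed.

End GeneratingPolynomial.

Section TruncatedSums.
Variable R : numDomainType.

Lemma sum_ord_le_support (f : nat -> R) N K :
  (forall k, 0 <= f k) -> (forall k, (K <= k)%N -> f k = 0) ->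
  \sum_(k < N) f k <= \sum_(k < K) f k.
Proof.
move=> f_ge0 f_eq0.
rewrite (big_ord_widen (maxn N K) f (leq_maxl _ _)).
rewrite [leRHS](big_ord_widen (maxn N K) f (leq_maxr _ _)).
rewrite big_mkcond [leRHS]big_mkcond /=; apply: ler_sum => i _.
by case: (ltnP i K) => [_|/f_eq0 ->]; case: (i < N)%N; rewrite ?lexx.
Qed.

Lemma sum_coef_le_horner1 (P : {poly R}) K :
  (forall i, 0 <= P`_i) -> \sum_(k < K) P`_k <= P.[1].
Proof.
move=> P_ge0; rewrite horner_coef; under [leRHS]eq_bigr do rewrite expr1n mulr1.
by apply: sum_ord_le_support => // k /(nth_default 0).
Qed.

End TruncatedSums.

Section Hermite.
Variable R : realType.
Implicit Types a b : R.

Lemma poisson_pmf_ge0 a k : 0 <= a -> 0 <= poisson_pmf a k.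
Proof.
by move=> a_ge0; rewrite /poisson_pmf divr_ge0 ?mulr_ge0 ?expR_ge0 ?exprn_ge0.
Qed.

Lemma sum_poisson_pmf_le1 a N : 0 <= a -> \sum_(k < N) poisson_pmf a k <= 1.
Proof.
move=> a_ge0.
have -> : \sum_(k < N) poisson_pmf a k = expR (- a) * series (exp_coeff a) N.
  rewrite /series /= big_mkord mulr_sumr; apply: eq_bigr => i _.
  by rewrite /poisson_pmf /exp_coeff /= mulrA.
rewrite -(expRxMexpNx_1 a) mulrC ler_wpM2r ?expR_ge0 //.
apply: nondecreasing_cvgn_le; last exact: is_cvg_series_exp_coeff.
apply/nondecreasing_seqP => n; rewrite /series /= big_nat_recr //= lerDl.
exact: exp_coeff_ge0.
Qed.

Lemma poisson_pmfD a a' n :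
  poisson_pmf (a + a') n = convn (poisson_pmf a) (poisson_pmf a') n.
Proof.
rewrite /poisson_pmf /convn addrC exprDn opprD expRD mulr_sumr mulr_suml.
apply: eq_bigr => i _.
have le_in : (i <= n)%N by rewrite -ltnS.
have fact_ne0 m : (m`!%:R : R) != 0 by rewrite pnatr_eq0 -lt0n fact_gt0.
have bin_ne0 : ('C(n, i)%:R : R) != 0 by rewrite pnatr_eq0 -lt0n bin_gt0.
rewrite -(bin_fact le_in) !natrM -mulr_natr.
by field; rewrite !fact_ne0 bin_ne0.
Qed.

Lemma genpoly_poissonD N a a' :
  genpoly N (poisson_pmf (a + a')) =
  take_poly N (genpoly N (poisson_pmf a) * genpoly N (poisson_pmf a')).
Proof.
apply/polyP => i; rewrite coef_take_poly coef_poly.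
by case: ifP => // ltiN; rewrite poisson_pmfD (coef_genpolyM _ _ ltiN).
Qed.

Definition hermpoly N a b : {poly R} :=
  genpoly N (poisson_pmf a) * (genpoly N (poisson_pmf b) \Po 'X^2).

Lemma coef_hermpoly N a b k : (k < N)%N -> (hermpoly N a b)`_k = herm_pmf a b k.
Proof. exact: coef_genpolyM_comp_X2. Qed.

Lemma genpoly_herm_pmf N a b : genpoly N (herm_pmf a b) = take_poly N (hermpoly N a b).
Proof.
apply/polyP => k; rewrite coef_take_poly coef_poly.
by case: ifP => // ltkN; rewrite (coef_hermpoly _ _ ltkN).
Qed.

Lemma herm_pmfD a b a' b' n :
  herm_pmf (a + a') (b + b') n = convn (herm_pmf a b) (herm_pmf a' b') n.
Proof.
have ltnN : (n < n.+1)%N by [].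
rewrite -(coef_hermpoly _ _ ltnN) -(coef_genpolyM _ _ ltnN) !genpoly_herm_pmf.
rewrite [RHS]coef_mul_take_poly // /hermpoly (genpoly_poissonD _ a a') (genpoly_poissonD _ b b').
by rewrite [LHS]coef_take_mul_comp_Xn // comp_polyM mulrACA.
Qed.

Lemma herm_pmf_ge0 a b k : 0 <= a -> 0 <= b -> 0 <= herm_pmf a b k.
Proof.
by move=> a_ge0 b_ge0; apply: sumr_ge0 => j _; rewrite mulr_ge0 ?poisson_pmf_ge0.
Qed.

Lemma coef_hermpoly_ge0 N a b i : 0 <= a -> 0 <= b -> 0 <= (hermpoly N a b)`_i.
Proof.
move=> a_ge0 b_ge0.
have genpoly_ge0 (c : R) m : 0 <= c -> 0 <= (genpoly N (poisson_pmf c))`_m.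
  by move=> c_ge0; rewrite coef_poly; case: ifP => // _; exact: poisson_pmf_ge0.
rewrite /hermpoly coefM sumr_ge0 // => j _; rewrite mulr_ge0 ?genpoly_ge0 //.
by rewrite coef_comp_poly_Xn //; case: ifP => // _; exact: genpoly_ge0.
Qed.

Lemma sum_herm_pmf_le1 a b K : 0 <= a -> 0 <= b -> \sum_(k < K) herm_pmf a b k <= 1.
Proof.
move=> a_ge0 b_ge0; under eq_bigr => k _ do rewrite -(coef_hermpoly a b (ltn_ord k)).
apply: le_trans (sum_coef_le_horner1 K (fun i => coef_hermpoly_ge0 K i a_ge0 b_ge0)) _.
rewrite hornerM horner_comp hornerXn expr1n !horner1_genpoly.
by rewrite mulr_ile1 ?sumr_ge0 ?sum_poisson_pmf_le1 // => k _; exact: poisson_pmf_ge0.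
Qed.

End Hermite.

Section Concentration.
Variable R : realType.
Implicit Types (p q : nat -> R) (x e : R).

Definition window_sum q x e N : R :=
  \sum_(k < N) (if (x <= k%:R) && (k%:R <= x + e) then q k else 0).

Lemma interval_probE q x e :
  interval_prob q x e = window_sum q x e `|Num.floor (x + e)|.+1.
Proof. by []. Qed.

Lemma window_sum_le_interval_prob q x e N :
  (forall k, 0 <= q k) -> window_sum q x e N <= interval_prob q x e.
Proof.
move=> q_ge0; pose f k := if (x <= k%:R) && (k%:R <= x + e) then q k else 0.
apply: (sum_ord_le_support (f := f)) => [k|k le_Kk]; rewrite /f; first by case: ifP.
case: ifP => // /andP[_ le_k]; have : (k%:Z <= Num.floor (x + e))%R by rewrite floor_ge_int.
by move: le_Kk; rewrite ltnNge; lia.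
Qed.

Lemma interval_prob_le1 q x e : (forall k, 0 <= q k) ->
  (forall K, \sum_(k < K) q k <= 1) -> interval_prob q x e <= 1.
Proof.
move=> q_ge0 /(_ `|Num.floor (x + e)|.+1); apply: le_trans.
by apply: ler_sum => k _; case: ifP.
Qed.

Lemma window_sum_shift q x e N i : (i <= N)%N ->
  window_sum (fun k => if (i <= k)%N then q (k - i)%N else 0) x e N =
  window_sum q (x - i%:R) e (N - i).
Proof.
move=> le_iN; pose W y k := (y <= k%:R) && (k%:R <= y + e).
pose f k := if W x k then (if (i <= k)%N then q (k - i)%N else 0) else 0.
pose g k := if W (x - i%:R) k then q k else 0.
rewrite /window_sum -/(W _ _) -(big_mkord xpredT f) -(big_mkord xpredT g).
rewrite (big_cat_nat (leq0n i) le_iN) /= big_nat_cond big1 ?add0r; last first.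
  by move=> k /andP[/andP[_ ltki] _]; rewrite /f; case: ifP => // _; rewrite leqNgt ltki.
rewrite -{1}(add0n i) big_addn; apply: eq_bigr => k _.
rewrite /f /g /W leq_addl addnK natrD.
by rewrite lerBlDr addrAC lerBrDr.
Qed.

Lemma convn_widen p q N k : (k < N)%N ->
  convn p q k = \sum_(i < N) p i * (if (i <= k)%N then q (k - i)%N else 0).
Proof.
move=> ltkN; rewrite /convn (big_ord_widen N (fun i => p i * q (k - i)%N) ltkN).
by rewrite big_mkcond; apply: eq_bigr => i _; rewrite ltnS; case: ifP; rewrite ?mulr0.
Qed.

Lemma window_sum_convn p q x e N :
  window_sum (convn p q) x e N = \sum_(i < N) p i *
    window_sum (fun k => if (i <= k)%N then q (k - i)%N else 0) x e N.
Proof.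
rewrite /window_sum; under eq_bigr => k _ do rewrite (convn_widen p q (ltn_ord k)).
rewrite (eq_bigr (fun k : 'I_N => \sum_(i < N) p i *
  (if (x <= k%:R) && (k%:R <= x + e) then if (i <= k)%N then q (k - i)%N else 0 else 0))).
  by rewrite exchange_big; apply: eq_bigr => i _; rewrite mulr_sumr.
by move=> k _; case: ifP => // _; rewrite big1 // => i _; rewrite mulr0.
Qed.

Lemma interval_prob_convn_le p q e M x :
  (forall k, 0 <= p k) -> (forall k, 0 <= q k) -> (forall K, \sum_(k < K) p k <= 1) ->
  0 <= M -> (forall y, interval_prob q y e <= M) -> interval_prob (convn p q) x e <= M.
Proof.
move=> p_ge0 q_ge0 p_le1 M_ge0 q_le_M; set K := `|Num.floor (x + e)|.+1.
rewrite interval_probE window_sum_convn -/K.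
apply: le_trans (_ : \sum_(i < K) p i * M <= M); last by rewrite -mulr_suml ler_piMl.
apply: ler_sum => i _; rewrite ler_wpM2l // window_sum_shift 1?ltnW //.
by apply: le_trans (q_le_M (x - i%:R)); exact: window_sum_le_interval_prob.
Qed.

Lemma le_wd_convn p q :
  (forall k, 0 <= p k) -> (forall k, 0 <= q k) ->
  (forall K, \sum_(k < K) p k <= 1) -> (forall K, \sum_(k < K) q k <= 1) ->
  le_wd q (convn p q).
Proof.
move=> p_ge0 q_ge0 p_le1 q_le1 e _.
have q_le_sup y : interval_prob q y e <= levy_conc q e.
  apply: sup_upper_bound; last by exists y.
  split; first by exists (interval_prob q 0 e), 0.
  by exists 1 => _ [z _ <-]; exact: interval_prob_le1.
apply: ge_sup; first by exists (interval_prob (convn p q) 0 e), 0.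
move=> _ [x _ <-]; apply: interval_prob_convn_le => //.
by apply: le_trans (q_le_sup 0); apply: sumr_ge0 => k _; case: ifP.
Qed.

End Concentration.

Theorem mainTheorem11 (R : realType) (a b c d : R) :
  0 < a -> a <= c -> 0 < b -> b <= d ->
  le_wd (herm_pmf a b) (herm_pmf c d).
Proof.
move=> a_gt0 le_ac b_gt0 le_bd.
have -> : herm_pmf c d = convn (herm_pmf (c - a) (d - b)) (herm_pmf a b).
  by apply/funext => n; rewrite -herm_pmfD !subrK.
have ca_ge0 : 0 <= c - a by rewrite subr_ge0.
have db_ge0 : 0 <= d - b by rewrite subr_ge0.
have [a_ge0 b_ge0] := (ltW a_gt0, ltW b_gt0).
by apply: le_wd_convn => *; rewrite ?herm_pmf_ge0 ?sum_herm_pmf_le1.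
Qed.
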